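(* Let $f\colon\mathbb{F}_2^n\times\mathbb{F}_2^d\to\mathbb{F}_2^r$ be a strong, linear, lossless condenser for min-entropy $m$ with error $\epsilon$, and for each seed $u$ let $H_u$ be the $r\times n$ matrix with $f(x,u)=H_ux$ and $\mathcal{C}_u:=\{x\in\mathbb{F}_2^n:H_ux=0\}$. Let $\mathcal{Z}$ be a flat distribution on $\mathbb{F}_2^n$ with entropy $m$. Then for at least a $1-2\sqrt{\epsilon}$ fraction of the choices of $u\in\mathbb{F}_2^d$, we have $\mathcal{E}(\mathcal{C}_u,\mathcal{Z})\le\sqrt{\epsilon}$.
   Context: Statistical distance is half the $\ell_1$ distance. A flat distribution of entropy $m$ is the uniform distribution on a set of size $2^m$. $f$ is a strong lossless condenser for min-entropy $m$ with error $\epsilon$ if for every distribution $\mathcal{X}$ on $\mathbb{F}_2^n$ with min-entropy at least $m$ (all probabilities at most $2^{-m}$), $X\sim\mathcal{X}$, and independent uniform $U\in\mathbb{F}_2^d$, $(U,f(X,U))$ is within statistical distance $\epsilon$ of some distribution $(\mathcal{U}_d,\mathcal{Y})$ of min-entropy at least $d+m$; linear means $f(\cdot,u)$ is linear for each $u$. Consider the additive noise channel which, on input $x\in\mathbb{F}_2^n$, outputs $x+z$ with $z\sim\mathcal{Z}$ independent of $x$. The brute-force decoder for $\mathcal{C}_u$, given $\hat{y}$, finds a codeword $y\in\mathcal{C}_u$ and $z\in\mathrm{supp}(\mathcal{Z})$ with $\hat{y}=y+z$ and outputs $y$ (with arbitrary choice among several such $y$, and an arbitrary codeword if none exists). $\mathcal{E}(\mathcal{C}_u,\mathcal{Z})$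 denotes its error probability, which we take to be $\max_{x\in\mathcal{C}_u}\Pr_{z\sim\mathcal{Z}}[\exists x'\in\mathcal{C}_u,\exists z'\in\mathrm{supp}(\mathcal{Z})\setminus\{z\}: x+z=x'+z']$ (the probability that the decoder may fail to output the transmitted codeword). *)

From mathcomp Require Import all_boot all_order all_algebra.
Set Implicit Arguments. Unset Strict Implicit. Unset Printing Implicit Defensive.
Import Order.TTheory GRing.Theory Num.Theory.
Local Open Scope ring_scope.

Definition is_distr (R : numDomainType) (T : finType) (P : T -> R) : Prop :=
  (forall t, 0 <= P t) /\ \sum_t P t = 1.

Definition min_entropy_ge (R : numFieldType) (T : finType) (P : T -> R) (k : nat) : Prop :=
  forall t, P t <= (2 ^+ k)^-1.

Definition stat_dist (R : numDomainType) (T : finType) (P Q : T -> R) : R :=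
  2^-1 * \sum_t `|P t - Q t|.

(* distribution of (U, f(X,U)) with U uniform on F_2^d independent of X *)
Definition seed_output_distr (R : numFieldType) (n d r : nat)
  (f : 'cV['F_2]_n -> 'cV['F_2]_d -> 'cV['F_2]_r) (X : 'cV['F_2]_n -> R)
  : 'cV['F_2]_d * 'cV['F_2]_r -> R :=
  fun p => (2 ^+ d)^-1 * \sum_(x | f x p.1 == p.2) X x.

Definition strong_lossless_condenser (R : numFieldType) (n d r : nat)
  (f : 'cV['F_2]_n -> 'cV['F_2]_d -> 'cV['F_2]_r) (m : nat) (eps : R) : Prop :=
  forall X : 'cV['F_2]_n -> R, is_distr X -> min_entropy_ge X m ->
  exists Y : 'cV['F_2]_d * 'cV['F_2]_r -> R,
    [/\ is_distr Y,
        (forall u, \sum_y Y (u, y) = (2 ^+ d)^-1),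
        min_entropy_ge Y (d + m)
      & stat_dist (seed_output_distr f X) Y <= eps].

Definition linear_seeded (n d r : nat)
  (f : 'cV['F_2]_n -> 'cV['F_2]_d -> 'cV['F_2]_r) : Prop :=
  forall u, (forall x y, f (x + y) u = f x u + f y u) /\
            (forall (a : 'F_2) x, f (a *: x) u = a *: f x u).

(* uniform distribution on S (flat; entropy m when #|S| = 2^m) *)
Definition flat_distr (R : numFieldType) (T : finType) (S : {set T}) : T -> R :=
  fun t => if t \in S then (#|S|%:R)^-1 else 0.

Definition code_of (n d r : nat) (H : 'cV['F_2]_d -> 'M['F_2]_(r, n)) (u : 'cV['F_2]_d)
  : {set 'cV['F_2]_n} := [set x | H u *m x == 0].

(* error probability of the brute-force decoder for code C under additive noise Z:
   max over x in C of Pr_{z ~ Z}[exists x' in C, z' in supp Z \ {z}, x+z = x'+z'] *)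
Definition error_prob (R : realDomainType) (n : nat) (C : {set 'cV['F_2]_n})
  (Z : 'cV['F_2]_n -> R) : R :=
  \big[Num.max/0]_(x in C)
     \sum_(z | [exists x' in C, exists z',
                  [&& Z z' != 0, z' != z & x + z == x' + z']]) Z z.

(* The flat source X on S has min-entropy m, so the condenser output P(u, y) =
   #|{z in S | H_u z = y}| / 2^(d+m) is eps-close to some Y whose masses are all at
   most 2^-(d+m).  Every z in S that collides with another z' in S under H_u lies in
   a fibre of size at least 2, where P exceeds Y by at least half of P; hence the
   collision fractions e_u of S satisfy avg_u e_u <= 2 eps.  The decoder can only fail
   on a colliding noise vector, so its error is at most e_u, and Markov's inequality
   gives e_u <= sqrt eps for all but a 2 sqrt eps fraction of the seeds. *)
From mathcomp Require Import all_boot all_order all_algebra.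
From mathcomp Require Import ring lra.
Import Order.TTheory GRing.Theory Num.Theory.
Set Implicit Arguments. Unset Strict Implicit.
Local Open Scope ring_scope.

Lemma sum_flat_distr (R : numFieldType) (T : finType) (S : {set T}) (p : pred T) :
  \sum_(x | p x) flat_distr R S x = #|[set x in S | p x]|%:R / #|S|%:R.
Proof.
rewrite big_mkcond /= mulr_natl -sumr_const [in RHS]big_mkcond /=.
by apply: eq_bigr => x _; rewrite /flat_distr inE; case: (x \in S); case: (p x).
Qed.

Lemma flat_distr_is_distr (R : numFieldType) (T : finType) (S : {set T}) :
  S != set0 -> is_distr (flat_distr R S).
Proof.
move=> S0; split=> [t|].
  by rewrite /flat_distr; case: ifP => // _; rewrite invr_ge0 ler0n.
rewrite (eq_bigl xpredT) // sum_flat_distr.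
have -> : #|[set x in S | xpredT x]| = #|S| by apply: eq_card => x; rewrite inE andbT.
by rewrite mulfV // pnatr_eq0 -lt0n card_gt0.
Qed.

Lemma flat_distr_min_entropy (R : numFieldType) (T : finType) (S : {set T}) (m : nat) :
  #|S| = (2 ^ m)%N -> min_entropy_ge (flat_distr R S) m.
Proof.
move=> cardS t; rewrite /flat_distr cardS natrX.
by case: ifP => _ //; rewrite invr_ge0 exprn_ge0.
Qed.

Lemma stat_distE (R : realFieldType) (T : finType) (P Q : T -> R) :
  \sum_t P t = \sum_t Q t -> stat_dist P Q = \sum_t Num.max (P t - Q t) 0.
Proof.
move=> PQ; have normE (a : R) : `|a| = 2 * Num.max a 0 - a.
  by rewrite maxEle; case: leP => ha; [rewrite ler0_norm // | rewrite gtr0_norm //]; lra.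
rewrite /stat_dist (eq_bigr _ (fun t _ => normE _)) sumrB -mulr_sumr sumrB PQ subrr.
by rewrite subr0 mulrA mulVf ?pnatr_eq0 // mul1r.
Qed.

Lemma stat_dist_ge0 (R : numFieldType) (T : finType) (P Q : T -> R) :
  0 <= stat_dist P Q.
Proof. by rewrite mulr_ge0 ?invr_ge0 ?ler0n // sumr_ge0. Qed.

Lemma sum_prod_curry (R : nmodType) (I J : finType) (F : I * J -> R) :
  \sum_p F p = \sum_i \sum_j F (i, j).
Proof. by rewrite pair_big; apply: eq_bigr => -[]. Qed.

Lemma card_colvec_F2 d : #|{: 'cV['F_2]_d}| = (2 ^ d)%N.
Proof. by rewrite card_mx card_Fp // muln1. Qed.

Lemma sum_seed_output_distr (R : numFieldType) (n d r : nat)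
    (f : 'cV['F_2]_n -> 'cV['F_2]_d -> 'cV['F_2]_r) (X : 'cV['F_2]_n -> R) :
  is_distr X -> \sum_p seed_output_distr f X p = 1.
Proof.
case=> _ sumX; rewrite sum_prod_curry.
transitivity (\sum_(u : 'cV['F_2]_d) (2 ^+ d : R)^-1).
  apply: eq_bigr => u _; rewrite -mulr_sumr -[RHS]mulr1 -sumX.
  by rewrite [X in _ = _ * X](partition_big (fun x => f x u) xpredT).
rewrite sumr_const -[#|_|]/#|{: 'cV['F_2]_d}| card_colvec_F2 -(mulr_natr _ (2 ^ d)) natrX.
by rewrite mulVf // expf_neq0 // pnatr_eq0.
Qed.

Definition collisions (n r : nat) (A : 'M['F_2]_(r, n)) (S : {set 'cV['F_2]_n}) :=
  [set z in S | [exists z' in S, (z' != z) && (A *m z' == A *m z)]].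

Section Collisions.

Variables (n r : nat) (A : 'M['F_2]_(r, n)) (S : {set 'cV['F_2]_n}).

Lemma error_prob_flat_le (R : realFieldType) :
  error_prob [set x | A *m x == 0] (flat_distr R S) <= #|collisions A S|%:R / #|S|%:R.
Proof.
have ratio_ge0 : 0 <= #|collisions A S|%:R / #|S|%:R :> R.
  by rewrite divr_ge0 ?ler0n.
apply: bigmax_le => // x xC; rewrite sum_flat_distr ler_wpM2r ?invr_ge0 ?ler0n //.
rewrite ler_nat; apply/subset_leq_card/subsetP => z.
rewrite !inE => /andP[zS /existsP[x' /andP[x'C /existsP[z' /and3P[Zz' z'z e]]]]].
have z'S : z' \in S by move: Zz'; rewrite /flat_distr; case: (z' \in S); rewrite ?eqxx.
rewrite zS; apply/existsP; exists z'; rewrite z'S z'z /=.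
move: xC x'C; rewrite !inE => /eqP Ax /eqP Ax'.
by move/eqP: e => /(congr1 (mulmx A)); rewrite !mulmxDr Ax Ax' !add0r => ->.
Qed.

Lemma sum_card_fibres (B : {set 'cV['F_2]_n}) :
  (\sum_y #|[set z in B | A *m z == y]|)%N = #|B|.
Proof.
rewrite -sum1_card (partition_big (fun z => A *m z) xpredT) //=.
by apply: eq_bigr => y _; rewrite -sum1_card; apply: eq_bigl => z; rewrite inE.
Qed.

Lemma collisions_fibre_le y :
  (#|[set z in collisions A S | A *m z == y]| <= #|[set z in S | A *m z == y]|)%N.
Proof.
by apply/subset_leq_card/subsetP => z; rewrite !inE => /andP[/andP[-> _] ->].
Qed.

Lemma collisions_fibre_gt0 y :
  (0 < #|[set z in collisions A S | A *m z == y]| ->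
   1 < #|[set z in S | A *m z == y]|)%N.
Proof.
case/card_gt0P => z; rewrite !inE.
case/andP => /andP[zS /existsP[z' /andP[z'S /andP[z'z e]]]] /eqP Az.
apply: (@leq_trans #|[set z'; z]|); first by rewrite cards2 z'z.
apply/subset_leq_card/subsetP => w.
by rewrite !inE => /orP[]/eqP->; rewrite ?z'S ?zS ?(eqP e) ?Az eqxx.
Qed.

End Collisions.

Lemma fibre_excess (R : realFieldType) (K b : R) (c k : nat) :
  0 <= K -> b <= K -> (k <= c)%N -> (0 < k -> 1 < c)%N ->
  K * k%:R / 2 <= Num.max (K * c%:R - b) 0.
Proof.
move=> K0 bK kc kc2; rewrite le_max; apply/orP.
case: (posnP k) => [->|k0]; first by right; rewrite mulr0 mul0r.
left; have c2 : 2 <= c%:R :> R by rewrite (ler_nat R 2) kc2.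
have : k%:R <= c%:R :> R by rewrite ler_nat.
nra.
Qed.

Lemma markov_card (R : realFieldType) (T : finType) (G : {set T}) (e : T -> R) (a s : R) :
  0 <= a -> 0 <= s -> (forall t, 0 <= e t) -> (forall t, t \notin G -> s < e t) ->
  \sum_t e t <= a * s ^+ 2 * #|T|%:R -> (1 - a * s) * #|T|%:R <= #|G|%:R.
Proof.
move=> a0 s0 e0 bad sum_e.
have cardG : #|G|%:R = #|T|%:R - #|~: G|%:R :> R by rewrite -(cardsC G) natrD addrK.
have [G_full|] := eqVneq (~: G) set0.
  by rewrite cardG G_full cards0 subr0 ler_piMl ?ler0n // lerBlDr lerDl mulr_ge0.
case/set0Pn => t0 t0G.
have markov : #|~: G|%:R * s < \sum_t e t.
  rewrite mulr_natl -sumr_const [X in _ < X](bigID (fun t => t \in ~: G)) /=.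
  apply: ltr_wpDr; first exact: sumr_ge0.
  apply: ltr_sum => [|t]; first by apply/hasP; exists t0; rewrite ?mem_index_enum.
  by rewrite inE => /bad.
have {markov}sum_bound := lt_le_trans markov sum_e.
rewrite cardG; have [s0_eq|s_neq0] := eqVneq s 0.
  by move: sum_bound; rewrite s0_eq expr0n /= !mulr0 mul0r ltxx.
have s_gt0 : 0 < s by rewrite lt0r s_neq0.
nra.
Qed.

Section LinearCondenser.

Variables (R : realFieldType) (n d r m : nat).
Variables (f : 'cV['F_2]_n -> 'cV['F_2]_d -> 'cV['F_2]_r) (H : 'cV['F_2]_d -> 'M['F_2]_(r, n)).
Variable S : {set 'cV['F_2]_n}.
Hypotheses (fH : forall x u, f x u = H u *m x) (cardS : #|S| = (2 ^ m)%N).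

Let K : R := (2 ^+ (d + m))^-1.

Lemma seed_output_flat u y :
  seed_output_distr f (flat_distr R S) (u, y) = K * #|[set z in S | H u *m z == y]|%:R.
Proof.
rewrite /seed_output_distr /= (eq_bigl (fun x => H u *m x == y)) => [|x]; last by rewrite fH.
by rewrite sum_flat_distr cardS natrX /K exprD invfM mulrA [RHS]mulrAC.
Qed.

Lemma collisions_le_stat_dist (Y : 'cV['F_2]_d * 'cV['F_2]_r -> R) :
  is_distr Y -> min_entropy_ge Y (d + m) ->
  \sum_u K * #|collisions (H u) S|%:R / 2
    <= stat_dist (seed_output_distr f (flat_distr R S)) Y.
Proof.
move=> [_ sumY] minY; have S0 : S != set0 by rewrite -card_gt0 cardS expn_gt0.
rewrite stat_distE; last by rewrite sumY (sum_seed_output_distr _ (flat_distr_is_distr R S0)).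
rewrite sum_prod_curry; apply: ler_sum => u _.
rewrite -(sum_card_fibres (H u) (collisions (H u) S)) natr_sum mulr_sumr mulr_suml.
apply: ler_sum => y _; rewrite seed_output_flat.
apply: fibre_excess; [by rewrite invr_ge0 exprn_ge0 | exact: minY |
  exact: collisions_fibre_le | exact: collisions_fibre_gt0].
Qed.

Lemma sum_collision_fraction_le (Y : 'cV['F_2]_d * 'cV['F_2]_r -> R) :
  is_distr Y -> min_entropy_ge Y (d + m) ->
  \sum_u #|collisions (H u) S|%:R / #|S|%:R
    <= 2 * 2 ^+ d * stat_dist (seed_output_distr f (flat_distr R S)) Y.
Proof.
move=> dY minY; have D0 : (0 : R) < 2 ^+ d by rewrite exprn_gt0.
have -> : \sum_u #|collisions (H u) S|%:R / #|S|%:R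
          = 2 * 2 ^+ d * \sum_u K * #|collisions (H u) S|%:R / 2.
  rewrite mulr_sumr; apply: eq_bigr => u _; rewrite /K cardS natrX exprD; field.
  by rewrite !expf_neq0 ?pnatr_eq0.
by rewrite ler_pM2l ?mulr_gt0 // collisions_le_stat_dist.
Qed.

End LinearCondenser.

Theorem mainTheorem17 (R : rcfType) (n d r m : nat) (eps : R)
  (f : 'cV['F_2]_n -> 'cV['F_2]_d -> 'cV['F_2]_r)
  (H : 'cV['F_2]_d -> 'M['F_2]_(r, n)) (S : {set 'cV['F_2]_n}) :
  strong_lossless_condenser f m eps ->
  linear_seeded f ->
  (forall x u, f x u = H u *m x) ->
  #|S| = (2 ^ m)%N ->
  1 - 2 * Num.sqrt eps <=
    #|[set u : 'cV['F_2]_d |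
        error_prob (code_of H u) (flat_distr R S) <= Num.sqrt eps]|%:R / 2 ^+ d.
Proof.
(* Linearity of [f] is already implied by [f x u = H u *m x]. *)
move=> cond _ fH cardS.
have S0 : S != set0 by rewrite -card_gt0 cardS expn_gt0.
have [Y [dY _ minY close]] :=
  cond _ (flat_distr_is_distr R S0) (flat_distr_min_entropy R cardS).
have eps0 : 0 <= eps := le_trans (stat_dist_ge0 _ _) close.
have D0 : (0 : R) < 2 ^+ d by rewrite exprn_gt0.
have collision_mass : \sum_u #|collisions (H u) S|%:R / #|S|%:R
             <= 2 * Num.sqrt eps ^+ 2 * #|{: 'cV['F_2]_d}|%:R.
  rewrite sqr_sqrtr // card_colvec_F2 natrX mulrAC.
  by rewrite (le_trans (sum_collision_fraction_le fH cardS dY minY)) // ler_pM2l ?mulr_gt0.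
rewrite ler_pdivlMr // -natrX -card_colvec_F2.
apply: markov_card collision_mass => //.
- by rewrite sqrtr_ge0.
- by move=> u; rewrite divr_ge0 ?ler0n.
- move=> u; rewrite inE -ltNge => bad.
  exact: lt_le_trans bad (error_prob_flat_le _ _ _).
Qed.
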